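(* Let $m\ge1$, let $Dic_m=\langle x,y\mid x^{2m},\,y^2x^m,\,y^{-1}xyx\rangle$ and $G=\mathbb{Z}/2m\mathbb{Z}\times\mathbb{Z}/2\mathbb{Z}=\langle x,y\mid x^{2m},y^2,[x,y]\rangle$. Let \[ P=\sum_{k=0}^{2m-1}\alpha_kx^k+\sum_{k=0}^{2m-1}\beta_k\,yx^k, \] regarded (with the same coefficients and words) both as an element of $\mathbb{C}[Dic_m]$ and of $\mathbb{C}G$, where the coefficients $\alpha_k$ are real and $P$ is reciprocal in both $\mathbb{C}[Dic_m]$ and $\mathbb{C}G$. Let $k=\sum_k(|\alpha_k|+|\beta_k|)$ and $|\lambda|<1/k$. Then \[ m_{G}(P,\lambda)=m_{Dic_m}(P,\lambda). \]
   Context: For a group $\Gamma$ and $Q=\sum_{g\in\Gamma}c_g g\in\mathbb{C}\Gamma$ (finite sum), the reciprocal is $Q^*=\sum_g\overline{c_g}\,g^{-1}$, and $Q$ is reciprocal if $Q=Q^*$. For reciprocal $P\in\mathbb{C}\Gamma$ with $l_1$-norm $k=\sum_g|c_g|$ and $|\lambda|<1/k$, define $m_\Gamma(P,\lambda)=-\sum_{n\ge1}a_n\lambda^n/n$, where $a_n$ is the coefficient of the identity element of $\Gamma$ in $P^n$. *)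

From mathcomp Require Import all_boot all_order all_algebra.
From mathcomp Require Import complex.
From mathcomp Require Import all_classical all_reals all_analysis.
Set Implicit Arguments. Unset Strict Implicit. Unset Printing Implicit Defensive.
Import Order.TTheory GRing.Theory Num.Theory.
Local Open Scope ring_scope.

(* Elements of both groups are written in normal form  y^b x^a,
   encoded as the pair (a, b) with a : 'Z_(2m) and b : bool. *)
Definition grp (m : nat) := ('Z_(m.*2) * bool)%type.

(* Dic_m = < x, y | x^(2m), y^2 x^m, y^-1 x y x >:
   x^a y = y x^(-a) and y^2 = x^m (central), hence
   (y^b1 x^a1)(y^b2 x^a2) = y^(b1 xor b2) x^(m[b1&&b2] + (-1)^b2 a1 + a2). *)
Definition dic_mul (m : nat) (g h : grp m) : grp m :=
  ((if g.2 && h.2 then (m%:R : 'Z_(m.*2)) else 0)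
     + (if h.2 then - g.1 else g.1) + h.1, g.2 (+) h.2).

Definition ab_mul (m : nat) (g h : grp m) : grp m := (g.1 + h.1, g.2 (+) h.2).

Definition grp_one (m : nat) : grp m := (0, false).

Section GroupAlgebra.
Variable R : realType.
Variable T : finType.
Variable mul : T -> T -> T.
Variable one : T.

Definition galg := T -> R[i].

Definition gconv (f g : galg) : galg :=
  fun c => \sum_(u : T) \sum_(v : T | mul u v == c) f u * g v.

Definition gdelta1 : galg := fun c => if c == one then 1 else 0.

Fixpoint gpow (P : galg) (n : nat) : galg :=
  if n is n'.+1 then gconv (gpow P n') P else gdelta1.

Definition acoef (P : galg) (n : nat) : R[i] := gpow P n one.

(* reciprocal: P* = sum conj(c_g) g^-1, i.e. P*(h) = conj(P(g)) where g h = 1 *)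
Definition reciprocal (P : galg) : Prop :=
  forall g h : T, mul g h = one -> P h = (P g)^*.

(* n-th term (n >= 0 indexes n+1 >= 1) of  m(P,lam) = - sum_{n>=1} a_n lam^n / n *)
Definition mterm (P : galg) (lam : R[i]) (n : nat) : R[i] :=
  - (acoef P n.+1 * lam ^+ n.+1 / (n.+1)%:R).

End GroupAlgebra.

Definition Pelt (R : realType) (m : nat) (alpha beta : 'Z_(m.*2) -> R[i])
  : grp m -> R[i] := fun g => if g.2 then beta g.1 else alpha g.1.

From mathcomp Require Import all_boot all_order all_algebra.
From mathcomp Require Import complex.
From mathcomp Require Import all_classical all_reals all_analysis.
Set Implicit Arguments. Unset Strict Implicit. Unset Printing Implicit Defensive.
Import Order.TTheory GRing.Theory Num.Theory.
Import numFieldNormedType.Exports.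
Local Open Scope classical_set_scope.
Local Open Scope ring_scope.

(* Write group elements as y^b x^a.  The involution
   twist (y^b x^a) = y^b x^(mb - a) is an automorphism of G, and the product of
   Dic_m is the product of G after twisting the left factor whenever the right
   factor involves y.  Hence a Dic_m-convolution Q * P with a twist-invariant
   left factor Q equals the G-convolution, by reindexing the sum over Q's
   argument.  Reciprocity of P in both groups together with the realness of
   the alpha_k makes P twist-invariant, so by induction every power P^n is the
   same in both group algebras and is twist-invariant; in particular the
   coefficients a_n agree.  The common series converges because the l^1 norm
   is submultiplicative, so |a_n| <= k^n. *)

Section Twist.
Variable m : nat.

Lemma Zp_m_add_m : m%:R + m%:R = 0 :> 'Z_(m.*2).
Proof.
rewrite -natrD addnn; case: m => [|n] //.
by rewrite pchar_Zp // doubleS.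
Qed.

Definition twist (g : grp m) : grp m :=
  (if g.2 then m%:R - g.1 else - g.1, g.2).

Lemma twistK : involutive twist.
Proof. by case=> a [] /=; rewrite /twist /= ?opprB ?opprK // addrC subrK. Qed.

Lemma twist_inj : injective twist. Proof. exact: inv_inj twistK. Qed.

Lemma twist_one : twist (grp_one m) = grp_one m.
Proof. by rewrite /twist /grp_one /= oppr0. Qed.

Lemma twist_ab_mul g h : twist (ab_mul g h) = ab_mul (twist g) (twist h).
Proof.
case: g => a [] ; case: h => c []; rewrite /twist /ab_mul /=; congr pair.
- by rewrite addrACA Zp_m_add_m add0r opprD.
- by rewrite opprD addrA.
- by rewrite opprD addrCA.
- by rewrite opprD.
Qed.

Lemma dic_mulE u v : dic_mul u v = ab_mul (if v.2 then twist u else u) v.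
Proof.
by case: u => a [] ; case: v => c []; rewrite /twist /ab_mul /dic_mul /= ?add0r.
Qed.

Variable R : realType.

Definition twist_invariant (Q : grp m -> R[i]) := forall g, Q (twist g) = Q g.

Lemma gconv_dic_ab (Q P : grp m -> R[i]) : twist_invariant Q ->
  gconv (@dic_mul m) Q P = gconv (@ab_mul m) Q P.
Proof.
move=> invQ; apply: boolp.funext => c; rewrite /gconv.
under eq_bigr do rewrite big_mkcond.
under [RHS]eq_bigr do rewrite big_mkcond.
rewrite exchange_big [RHS]exchange_big; apply: eq_bigr => v _ /=.
rewrite [RHS](reindex_inj (h := fun u => if v.2 then twist u else u)) /=;
  last by case: (v.2) => //; exact: twist_inj.
by apply: eq_bigr => u _; rewrite dic_mulE; case: (v.2); rewrite ?invQ.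
Qed.

Lemma twist_invariant_gconv_ab (Q P : grp m -> R[i]) :
  twist_invariant Q -> twist_invariant P ->
  twist_invariant (gconv (@ab_mul m) Q P).
Proof.
move=> invQ invP c; rewrite /gconv (reindex_inj twist_inj).
apply: eq_bigr => u _; rewrite [LHS]big_mkcond [RHS]big_mkcond.
rewrite [LHS](reindex_inj twist_inj); apply: eq_bigr => v _ /=.
by rewrite -twist_ab_mul (inj_eq twist_inj) invQ invP.
Qed.

Lemma twist_invariant_gdelta1 : twist_invariant (gdelta1 R (grp_one m)).
Proof. by move=> g; rewrite /gdelta1 -{1}twist_one (inj_eq twist_inj). Qed.

Lemma twist_invariant_gpow_ab (P : grp m -> R[i]) n : twist_invariant P ->
  twist_invariant (gpow (@ab_mul m) (grp_one m) P n).
Proof.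
move=> invP; elim: n => [|n IHn] /=; first exact: twist_invariant_gdelta1.
exact: twist_invariant_gconv_ab.
Qed.

Lemma gpow_dic_ab (P : grp m -> R[i]) n : twist_invariant P ->
  gpow (@dic_mul m) (grp_one m) P n = gpow (@ab_mul m) (grp_one m) P n.
Proof.
move=> invP; elim: n => [|n IHn] //=.
by rewrite IHn gconv_dic_ab //; exact: twist_invariant_gpow_ab.
Qed.

Lemma mterm_dic_ab (P : grp m -> R[i]) lam : twist_invariant P ->
  mterm (@dic_mul m) (grp_one m) P lam = mterm (@ab_mul m) (grp_one m) P lam.
Proof.
by move=> invP; apply: boolp.funext => n; rewrite /mterm /acoef gpow_dic_ab.
Qed.

Lemma reciprocal_twist_invariant (Q : grp m -> R[i]) :
  (forall a, Q (a, false) \is Num.real) ->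
  reciprocal (@dic_mul m) (grp_one m) Q ->
  reciprocal (@ab_mul m) (grp_one m) Q -> twist_invariant Q.
Proof.
move=> Qreal recD recG [a []]; rewrite /twist /=.
- have recG1 x : Q (- x, true) = (Q (x, true))^*.
    by apply: recG; rewrite /ab_mul /grp_one /= subrr.
  have recD1 x : Q (x - m%:R, true) = (Q (x, true))^*.
    by apply: recD; rewrite /dic_mul /grp_one /= addrA subrK subrr.
  by rewrite -[m%:R - a]opprB recG1 recD1 conjCK.
- rewrite (recG (a, false)) ?conj_Creal //.
  by rewrite /ab_mul /grp_one /= subrr.
Qed.

End Twist.

Section L1Bound.
Variables (R : realType) (T : finType) (mul : T -> T -> T) (one : T).

Lemma gconv_l1_le (Q P : T -> R[i]) :
  \sum_c `|gconv mul Q P c| <= (\sum_c `|Q c|) * (\sum_c `|P c|).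
Proof.
apply: (@le_trans _ _ (\sum_c \sum_u \sum_(v | mul u v == c) `|Q u| * `|P v|)).
  apply: ler_sum => c _; apply: (le_trans (ler_norm_sum _ _ _)).
  apply: ler_sum => u _; apply: (le_trans (ler_norm_sum _ _ _)).
  by apply: ler_sum => v _; rewrite normrM.
rewrite exchange_big mulr_suml; apply: ler_sum => u _.
by rewrite mulr_sumr [X in _ <= X](partition_big (mul u) xpredT).
Qed.

Lemma gpow_l1_le (P : T -> R[i]) n :
  \sum_c `|gpow mul one P n c| <= (\sum_c `|P c|) ^+ n.
Proof.
elim: n => [|n IHn] /=.
  rewrite expr0 (bigD1 one) //= big1 ?addr0 /gdelta1 ?eqxx ?normr1 //.
  by move=> c /negbTE ->; rewrite normr0.
apply: (le_trans (gconv_l1_le _ _)); rewrite exprSr.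
by apply: ler_wpM2r => //; apply: sumr_ge0.
Qed.

Lemma acoef_norm_le (P : T -> R[i]) n :
  `|acoef mul one P n| <= (\sum_c `|P c|) ^+ n.
Proof.
apply: le_trans (gpow_l1_le P n).
by rewrite /acoef (bigD1 one) //= lerDl sumr_ge0.
Qed.

Lemma mterm_norm_le (P : T -> R[i]) lam n :
  `|mterm mul one P lam n| <= (`|lam| * \sum_c `|P c|) ^+ n.+1.
Proof.
rewrite /mterm normrN !normrM normfV normr_nat.
apply: (le_trans (ler_piMr _ _)); first by rewrite mulr_ge0.
  by rewrite invf_le1 // ler1n.
by rewrite exprMn mulrC normrX ler_wpM2l ?exprn_ge0 // acoef_norm_le.
Qed.

End L1Bound.

Section ComplexSeries.
Variable R : realType.
Local Open Scope complex_scope.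

Lemma normc_ge_Im (z : R[i]) : `|complex.Im z|%:C <= `|z|.
Proof.
by have := normc_ge_Re (z * 'i); rewrite ReiNIm normrN normrM normCi mulr1.
Qed.

Lemma normc_le_Re_Im (z : R[i]) :
  `|z| <= `|complex.Re z|%:C + `|complex.Im z|%:C.
Proof.
rewrite {1}[z]complexE; apply: (le_trans (ler_normD _ _)).
by rewrite normrM normCi mul1r !normc_def /= !expr0n /= !addr0 !sqrtr_sqr.
Qed.

Lemma cvg_Re_Im (f : nat -> R[i]) (a b : R) :
  (fun n => complex.Re (f n)) @ \oo --> a ->
  (fun n => complex.Im (f n)) @ \oo --> b ->
  (f : nat -> R[i]^o) @ \oo --> (a +i* b : R[i]^o).
Proof.
move=> /cvgrPdist_lt fRe /cvgrPdist_lt fIm; apply/cvgrPdist_lt => e e_gt0.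
move: (e_gt0); rewrite ltcE /= => /andP[/eqP Im_e Re_e_gt0].
have eE : e = (complex.Re e)%:C by rewrite [LHS]complexE Im_e mulr0 addr0.
have e2_gt0 : 0 < complex.Re e / 2 by rewrite divr_gt0.
near=> n.
apply: (le_lt_trans (normc_le_Re_Im _)).
have -> : complex.Re (a +i* b - f n) = a - complex.Re (f n) by case: (f n).
have -> : complex.Im (a +i* b - f n) = b - complex.Im (f n) by case: (f n).
rewrite eE -rmorphD ltcR [complex.Re e]splitr ltrD //.
- by near: n; exact: fRe.
- by near: n; exact: fIm.
Unshelve. all: by end_near.
Qed.

Lemma Re_series (u : nat -> R[i]) n :
  complex.Re (series u n) = series (fun k => complex.Re (u k)) n.
Proof. exact: (raddf_sum (@complex.Re R : Rcomplex R -> R)). Qed.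

Lemma Im_series (u : nat -> R[i]) n :
  complex.Im (series u n) = series (fun k => complex.Im (u k)) n.
Proof. exact: (raddf_sum (@complex.Im R : Rcomplex R -> R)). Qed.

Lemma cvg_series_geometric_bound (s : nat -> R) (r : R) :
  0 <= r -> r < 1 -> (forall n, `|s n| <= r ^+ n) -> cvgn (series s).
Proof.
move=> r_ge0 r_lt1 s_le; apply: normed_cvg.
apply: (series_le_cvg (v_ := geometric 1 r)) => [n|n|n|].
- exact: normr_ge0.
- by rewrite /geometric /= mul1r exprn_ge0.
- by rewrite /geometric /= mul1r.
- by apply: is_cvg_geometric_series; rewrite ger0_norm.
Qed.

(* R[i] has no complete normed space instance, so convergence is obtained
   componentwise from the real and imaginary parts. *)
Lemma cvg_complex_series_geometric_bound (u : nat -> R[i]) (r : R[i]) :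
  0 <= r -> r < 1 -> (forall n, `|u n| <= r ^+ n) ->
  exists l : R[i]^o, (series u : nat -> R[i]^o) @ \oo --> l.
Proof.
move=> r_ge0 r_lt1 u_le.
have rE : r = (complex.Re r)%:C by rewrite [LHS]complexE ger0_Im // mulr0 addr0.
move: r_ge0 r_lt1 u_le; rewrite rE ler0c ltcR => Re_r_ge0 Re_r_lt1 u_le.
have /cvg_ex[a Re_cvg] : cvgn (series (fun k => complex.Re (u k))).
  apply: (cvg_series_geometric_bound Re_r_ge0 Re_r_lt1) => n.
  by rewrite -lecR rmorphXn (le_trans (normc_ge_Re _)).
have /cvg_ex[b Im_cvg] : cvgn (series (fun k => complex.Im (u k))).
  apply: (cvg_series_geometric_bound Re_r_ge0 Re_r_lt1) => n.
  by rewrite -lecR rmorphXn (le_trans (normc_ge_Im _)).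
exists (a +i* b); apply: cvg_Re_Im.
- by under eq_fun do rewrite Re_series.
- by under eq_fun do rewrite Im_series.
Qed.

End ComplexSeries.

Lemma Pelt_l1 (R : realType) (m : nat) (alpha beta : 'Z_(m.*2) -> R[i]) :
  \sum_g `|Pelt alpha beta g| = \sum_(k : 'Z_(m.*2)) (`|alpha k| + `|beta k|).
Proof.
rewrite [RHS](eq_bigr (fun k => \sum_b `|Pelt alpha beta (k, b)|)).
  by rewrite pair_big; apply: eq_bigr => -[].
by move=> k _; rewrite big_bool /Pelt /= addrC.
Qed.

Theorem theorem8p1 (R : realType) (m : nat) (hm : (1 <= m)%N)
  (alpha beta : 'Z_(m.*2) -> R[i])
  (halpha : forall k, alpha k \is Num.real)
  (hrecD : reciprocal (@dic_mul m) (grp_one m) (Pelt alpha beta))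
  (hrecG : reciprocal (@ab_mul m) (grp_one m) (Pelt alpha beta))
  (lam : R[i])
  (hlam : `|lam| * (\sum_(k : 'Z_(m.*2)) (`|alpha k| + `|beta k|)) < 1) :
  exists l : R[i]^o,
    series (mterm (@ab_mul m) (grp_one m) (Pelt alpha beta) lam : nat -> R[i]^o) @ \oo --> l /\
    series (mterm (@dic_mul m) (grp_one m) (Pelt alpha beta) lam : nat -> R[i]^o) @ \oo --> l.
Proof.
have P_inv : twist_invariant (Pelt alpha beta) by exact: reciprocal_twist_invariant.
rewrite mterm_dic_ab //.
set r := `|lam| * _ in hlam.
have r_ge0 : 0 <= r by rewrite mulr_ge0 ?sumr_ge0.
have mterm_le n :
    `|mterm (@ab_mul m) (grp_one m) (Pelt alpha beta) lam n| <= r ^+ n.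
  apply: le_trans (mterm_norm_le _ _ _ _ _) _.
  by rewrite Pelt_l1 -/r exprS ler_piMl ?exprn_ge0 // ltW.
have [l u_cvg] := cvg_complex_series_geometric_bound r_ge0 hlam mterm_le.
by exists l.
Qed.
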